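(* For every non-constant total symmetric Boolean function $f:\{0,1\}^n\to\{0,1\}$ with $n\ge 2$, $\mathrm{MM}'(f)=O(\sqrt{t_f\cdot n})$.
   Context: A Boolean function $f:\{0,1\}^n\to\{0,1\}$ is symmetric if $f(x)$ depends only on the Hamming weight $|x|$ (number of ones). For such $f$, $t_f$ is the minimum nonnegative integer $t$ such that $f$ is constant on all inputs $x$ with $t\le|x|\le n-t$. For $f$ with domain $D\subseteq\{0,1\}^n$, \[ \mathrm{MM}'(f)=\min_{w}\max_{x\in D}\sum_{i\in[n]} w(x,i) \] over weight functions $w:D\times[n]\to\mathbb{R}_{\ge0}$ subject to $\sum_{i:x_i\neq y_i} w(x,i)\,w(y,i)\ge 1$ for all $x,y\in D$ with $f(x)\neq f(y)$. *)

From HB Require Import structures.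
From mathcomp Require Import all_boot all_order all_algebra.
From mathcomp Require Import all_classical all_reals.
Set Implicit Arguments. Unset Strict Implicit. Unset Printing Implicit Defensive.
Import Order.TTheory GRing.Theory Num.Theory.

Definition input (n : nat) := {ffun 'I_n -> bool}.

Definition hw (n : nat) (x : input n) : nat := #|[set i | x i]|.

Definition symmetric_fn (n : nat) (f : input n -> bool) : Prop :=
  forall x y : input n, hw x = hw y -> f x = f y.

Definition nonconstant (n : nat) (f : input n -> bool) : Prop :=
  exists x y : input n, f x != f y.

Definition const_between (n : nat) (f : input n -> bool) (t : nat) : bool :=
  [forall x : input n, forall y : input n,
     [&& t <= hw x, hw x <= n - t, t <= hw y & hw y <= n - t] ==> (f x == f y)].

Lemma const_between_exists (n : nat) (f : input n -> bool) :
  exists t, const_between f t.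
Proof.
exists n.+1; apply/forallP => x; apply/forallP => y; apply/implyP.
case/and4P => h1 h2 _ _.
have : n.+1 <= n - n.+1 by apply: leq_trans h2.
by rewrite subnS subnn.
Qed.

Definition tf (n : nat) (f : input n -> bool) : nat :=
  ex_minn (const_between_exists f).

Local Open Scope ring_scope.

Definition feasible_weight (R : realType) (n : nat) (f : input n -> bool)
    (w : input n -> 'I_n -> R) : Prop :=
  (forall x i, 0 <= w x i) /\
  (forall x y : input n, f x != f y ->
     1 <= \sum_(i < n | x i != y i) w x i * w y i).

(* max_{x in D} sum_i w(x,i)  (all sums are >= 0, so 0 is a neutral start). *)
Definition weight_cost (R : realType) (n : nat) (w : input n -> 'I_n -> R) : R :=
  \big[Num.max/0]_(x : input n) \sum_(i < n) w x i.

(* MM'(f) = min over feasible w of the cost (taken as an infimum). *)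
Definition MMprime (R : realType) (n : nat) (f : input n -> bool) : R :=
  inf [set c : R | exists w, feasible_weight f w /\ c = weight_cost w].

From HB Require Import structures.
From mathcomp Require Import all_boot all_order all_algebra.
From mathcomp Require Import all_classical all_reals.
From mathcomp Require Import zify.
Import Order.TTheory GRing.Theory Num.Theory.
Local Open Scope ring_scope.

(* Put s := sqrt (t n) with t := t_f, r := s / n and u := n / s, so r u = 1.
   Every coordinate of x gets weight r, and in addition weight u / Q(|x|) if
   x_i = 1 and u / P(|x|) if x_i = 0, where Q(m) = max(1, m + 1 - t) and
   P(j) = max(1, n + 1 - t - j).  Since |x| <= t Q(|x|) and
   n - |x| <= t P(|x|), the cost of x is at most n r + s + s = 3 s.
   If f x <> f y with |x| < |y|, then |x| < t or |y| > n - t, so the scale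
   q = Q(|y|), resp. q = P(|x|), satisfies q <= |y| - |x|.  At the at least
   |y| - |x| coordinates where x_i = 0 and y_i = 1 the product of the weights
   is at least r u / q = 1 / q, so the pair constraint holds. *)

Lemma sumr_const_pred (V : nmodType) (T : finType) (P : pred T) (c : V) :
  \sum_(i | P i) c = c *+ #|[set i | P i]|.
Proof. by rewrite -big_set /= sumr_const. Qed.

Section Inputs.
Context {n : nat}.
Implicit Types x y : input n.

Lemma hw_le x : (hw x <= n)%N.
Proof. by rewrite /hw -[X in (_ <= X)%N](card_ord n) max_card. Qed.

Lemma card_zeros x : #|[set i | ~~ x i]| = (n - hw x)%N.
Proof.
have := cardsC [set i | x i]; rewrite card_ord.
have -> : ~: [set i | x i] = [set i | ~~ x i] by apply/setP => i; rewrite !inE.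
rewrite /hw; lia.
Qed.

Lemma hw_subn_le_card_flips x y : (hw y - hw x <= #|[set i | ~~ x i && y i]|)%N.
Proof.
have sub : [set i | y i] \subset [set i | x i] :|: [set i | ~~ x i && y i].
  by apply/fintype.subsetP => i; rewrite !inE; case: (x i).
have := subset_leq_card sub.
have := cardsU [set i | x i] [set i | ~~ x i && y i].
rewrite /hw; lia.
Qed.

End Inputs.

Section WeightFunctions.
Context {R : realType} {n : nat}.
Implicit Types (x y : input n) (w : input n -> 'I_n -> R).

Lemma sum_flips_ge w x y (c : R) : (forall x i, 0 <= w x i) -> 0 <= c ->
    (forall i, ~~ x i -> y i -> c <= w x i * w y i) ->
  c *+ (hw y - hw x) <= \sum_(i | x i != y i) w x i * w y i.
Proof.
move=> w_ge0 c_ge0 c_le.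
have flips_le : \sum_(i | ~~ x i && y i) w x i * w y i
    <= \sum_(i | x i != y i) w x i * w y i.
  rewrite [X in X <= _]big_mkcond [X in _ <= X]big_mkcond; apply: ler_sum => i _.
  by case: (x i); case: (y i); rewrite //= mulr_ge0.
apply: le_trans flips_le.
apply: (@le_trans _ _ (c *+ #|[set i | ~~ x i && y i]|)).
  exact/ler_wpMn2l/hw_subn_le_card_flips.
rewrite -sumr_const_pred.
by apply: ler_sum => i /andP[]; apply: c_le.
Qed.

Lemma weight_cost_ge0 w : (forall x i, 0 <= w x i) -> 0 <= weight_cost w.
Proof.
move=> w_ge0; rewrite /weight_cost; elim/big_ind: _ => //.
  by move=> a b a_ge0 _; rewrite le_max a_ge0.
by move=> x _; apply: sumr_ge0.
Qed.

Lemma weight_cost_le w (c : R) : 0 <= c -> (forall x, \sum_i w x i <= c) ->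
  weight_cost w <= c.
Proof.
move=> c_ge0 sum_le; rewrite /weight_cost; elim/big_ind: _ => //.
by move=> a b ha hb; rewrite ge_max ha hb.
Qed.

Variable f : input n -> bool.

Lemma MMprime_le_weight_cost w : feasible_weight f w -> MMprime R f <= weight_cost w.
Proof.
move=> feas_w; apply: ge_inf; last by exists w.
by exists 0 => _ [w' [[w'_ge0 _] ->]]; apply: weight_cost_ge0.
Qed.

Lemma feasible_weight_hw_lt w : symmetric_fn f -> (forall x i, 0 <= w x i) ->
    (forall x y, f x != f y -> (hw x < hw y)%N ->
       1 <= \sum_(i | x i != y i) w x i * w y i) ->
  feasible_weight f w.
Proof.
move=> sym_f w_ge0 lt_feas; split=> // x y fxy.
have : hw x != hw y by apply: contra fxy => /eqP /sym_f ->.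
case: ltngtP => // lt_yx _; first exact: lt_feas.
rewrite (eq_bigl (fun i => y i != x i)) => [|i]; last by rewrite eq_sym.
under eq_bigr do rewrite mulrC.
by apply: lt_feas; rewrite // eq_sym.
Qed.

End WeightFunctions.

Section Threshold.
Context {n : nat}.
Implicit Types (f : input n -> bool) (x y : input n).

Lemma const_between_tf f : const_between f (tf f).
Proof. by rewrite /tf; case: ex_minnP. Qed.

Lemma const_between_outside f t x y : const_between f t -> f x != f y ->
  (hw x < hw y)%N -> (hw x < t)%N || (n - t < hw y)%N.
Proof.
move=> /forallP /(_ x) /forallP /(_ y) /implyP ct fxy lt_xy.
have : ~~ [&& t <= hw x, hw x <= n - t, t <= hw y & hw y <= n - t]%N.
  by apply: contra fxy => /ct.
case: (leqP t (hw x)); case: (leqP (hw y) (n - t)) => //= *; lia.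
Qed.

Lemma tf_gt0 f : nonconstant f -> (0 < tf f)%N.
Proof.
case=> x [y fxy]; rewrite lt0n; apply: contraTneq fxy => tf0.
have := const_between_tf f; rewrite tf0.
move=> /forallP /(_ x) /forallP /(_ y) /implyP const_xy.
by rewrite negbK const_xy // !subn0 !hw_le.
Qed.

End Threshold.

Definition ones_scale (t m : nat) : nat := maxn 1 (m.+1 - t).
Definition zeros_scale (n t j : nat) : nat := maxn 1 (n.+1 - t - j).

Lemma ones_scale_gt0 t m : (0 < ones_scale t m)%N.
Proof. by rewrite leq_maxl. Qed.

Lemma zeros_scale_gt0 n t j : (0 < zeros_scale n t j)%N.
Proof. by rewrite leq_maxl. Qed.

Lemma leq_mul_ones_scale t m : (0 < t)%N -> (m <= t * ones_scale t m)%N.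
Proof. rewrite /ones_scale; nia. Qed.

Lemma leq_mul_zeros_scale n t j : (0 < t)%N -> (n - j <= t * zeros_scale n t j)%N.
Proof. rewrite /zeros_scale; nia. Qed.

Lemma ones_scale_le {t j m} : (j < t)%N -> (j < m)%N -> (ones_scale t m <= m - j)%N.
Proof. rewrite /ones_scale; lia. Qed.

Lemma zeros_scale_le {n t j m} : (n - t < m)%N -> (j < m)%N ->
  (zeros_scale n t j <= m - j)%N.
Proof. rewrite /zeros_scale; lia. Qed.

Section SqrtWeight.
Variables (R : realType) (n t : nat).
Hypotheses (n_gt0 : (0 < n)%N) (t_gt0 : (0 < t)%N).

Let s : R := Num.sqrt (t * n)%:R.
Let r : R := s / n%:R.
Let u : R := n%:R / s.

Let s_gt0 : 0 < s. Proof. by rewrite sqrtr_gt0 ltr0n muln_gt0 t_gt0 n_gt0. Qed.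
Let r_ge0 : 0 <= r. Proof. by rewrite divr_ge0 ?ler0n // ltW. Qed.
Let u_ge0 : 0 <= u. Proof. by rewrite divr_ge0 ?ler0n // ltW. Qed.

Let mul_ru : r * u = 1.
Proof. by rewrite /r /u mulrA divfK ?pnatr_eq0 -?lt0n // divff ?gt_eqF. Qed.

Let mul_nr : n%:R * r = s.
Proof. by rewrite /r mulrC divfK // pnatr_eq0 -lt0n. Qed.

Let mul_tu : t%:R * u = s.
Proof.
rewrite /u mulrA -natrM; apply: (mulIf (lt0r_neq0 s_gt0)).
by rewrite divfK ?gt_eqF // -expr2 sqr_sqrtr.
Qed.

Let scaled_u_ge0 (q : nat) : 0 <= u / q%:R.
Proof. by rewrite divr_ge0 ?ler0n ?u_ge0. Qed.

Let scaled_u_sum_le (k q : nat) : (0 < q)%N -> (k <= t * q)%N -> (u / q%:R) *+ k <= s.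
Proof.
move=> q_gt0 k_le; rewrite -mul_tu -mulr_natl mulrCA [_ * u]mulrC ler_wpM2l ?u_ge0 //.
by rewrite ler_pdivrMr ?ltr0n // -natrM ler_nat.
Qed.

Let mul_scaled_u_ge (q k : nat) : (0 < q)%N -> (q <= k)%N -> 1 <= (r * (u / q%:R)) *+ k.
Proof.
move=> q_gt0 q_le; rewrite mulrA mul_ru mul1r -mulr_natr mulrC.
by rewrite ler_pdivlMr ?ltr0n // mul1r ler_nat.
Qed.

Definition sqrt_weight (x : input n) (i : 'I_n) : R :=
  r + (if x i then u / (ones_scale t (hw x))%:R else u / (zeros_scale n t (hw x))%:R).

Lemma sqrt_weight_ge0 x i : 0 <= sqrt_weight x i.
Proof. by rewrite /sqrt_weight addr_ge0 ?r_ge0 //; case: (x i). Qed.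

Lemma sqrt_weight_sum_le x : \sum_i sqrt_weight x i <= 3%:R * s.
Proof.
rewrite big_split /= sumr_const card_ord -[r *+ n]mulr_natl mul_nr (bigID (fun i => x i)) /=.
rewrite (eq_bigr (fun=> u / (ones_scale t (hw x))%:R)) => [|i ->//].
rewrite [X in _ + (_ + X)](eq_bigr (fun=> u / (zeros_scale n t (hw x))%:R)) => [|i /negbTE ->//].
rewrite !sumr_const_pred card_zeros.
have -> : 3%:R * s = s + (s + s) by rewrite mulr_natl 2!mulrS mulr1n.
by rewrite lerD2l lerD // scaled_u_sum_le ?ones_scale_gt0 ?zeros_scale_gt0
  ?leq_mul_ones_scale ?leq_mul_zeros_scale.
Qed.

Lemma sqrt_weight_flips x y : (hw x < hw y)%N -> (hw x < t)%N || (n - t < hw y)%N ->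
  1 <= \sum_(i | x i != y i) sqrt_weight x i * sqrt_weight y i.
Proof.
move=> lt_xy outside.
pose c := (r + u / (zeros_scale n t (hw x))%:R) * (r + u / (ones_scale t (hw y))%:R).
have c_ge0 : 0 <= c by rewrite mulr_ge0 // addr_ge0 ?r_ge0.
apply: (@le_trans _ _ (c *+ (hw y - hw x))); last first.
  apply: sum_flips_ge => // [x' i|i /negbTE x0 y1]; first exact: sqrt_weight_ge0.
  by rewrite /sqrt_weight x0 y1.
case/orP: outside => [x_lt|y_gt].
- apply: le_trans (mul_scaled_u_ge _ _ (ones_scale_gt0 t (hw y))
    (ones_scale_le x_lt lt_xy)) _.
  by apply: ler_wMn2r; rewrite /c ler_pM ?r_ge0 ?scaled_u_ge0 ?lerDl ?lerDr.
- apply: le_trans (mul_scaled_u_ge _ _ (zeros_scale_gt0 n t (hw x))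
    (zeros_scale_le y_gt lt_xy)) _.
  by apply: ler_wMn2r; rewrite /c mulrC ler_pM ?r_ge0 ?scaled_u_ge0 ?lerDl ?lerDr.
Qed.

End SqrtWeight.

Theorem mainTheorem5 (R : realType) :
  exists C : R, forall (n : nat) (f : input n -> bool),
    (2 <= n)%N -> symmetric_fn f -> nonconstant f ->
    MMprime R f <= C * Num.sqrt (((tf f) * n)%:R).
Proof.
exists 3%:R => n f n_ge2 sym_f nonconst_f.
have n_gt0 : (0 < n)%N by lia.
have t_gt0 := tf_gt0 f nonconst_f.
apply: (@le_trans _ _ (weight_cost (sqrt_weight R n (tf f)))).
  apply/MMprime_le_weight_cost/feasible_weight_hw_lt => // [x i|x y fxy lt_xy].
    exact: sqrt_weight_ge0.
  apply: sqrt_weight_flips => //.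
  exact: const_between_outside (const_between_tf f) fxy lt_xy.
apply: weight_cost_le => [|x]; last exact: sqrt_weight_sum_le.
by rewrite mulr_ge0 ?ler0n ?sqrtr_ge0.
Qed.
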